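(* Let $p$ be an odd prime and $k\in\{1,2,\ldots,(p-1)/2\}$. Then $$\binom{\frac{p-1}2+k}{2k}\equiv\frac{\binom{2k}k}{(-16)^k}\Big(1-p^2\sum_{i=1}^k\frac1{(2i-1)^2}\Big)\pmod{p^4}.$$
   Context: Congruences are between rational numbers whose denominators are prime to $p$. *)

From HB Require Import structures.
From mathcomp Require Import all_boot all_order all_algebra.
Set Implicit Arguments. Unset Strict Implicit. Unset Printing Implicit Defensive.
Import Order.TTheory GRing.Theory Num.Theory.
Local Open Scope ring_scope.

Definition rat_cong_mod (p n : nat) (x y : rat) : Prop :=
  exists (a b : int), ~~ (p%:Z %| b)%Z /\ x - y = (p ^ n)%:R * a%:~R / b%:~R.

From HB Require Import structures.
From mathcomp Require Import all_boot all_order all_algebra.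
From mathcomp Require Import ring lra zify.
Import Order.TTheory GRing.Theory Num.Theory.
Set Implicit Arguments. Unset Strict Implicit. Unset Printing Implicit Defensive.
Local Open Scope ring_scope.

(* Write p = 2n + 1.  Pairing the factors n + i and n + 1 - i of the numerator
   of C(n + k, 2k) gives (p^2 - (2i - 1)^2) / 4, and the product of the (2i - 1)^2
   is the square of (2k)! / (2^k k!); hence the exact identity
     C(n + k, 2k) = C(2k, k) / (-16)^k * prod_(i <= k) (1 - p^2 / (2i - 1)^2),
   which holds for every n and k and is proved below by induction on k.
   Expanding the product, every term of degree at least 2 in p^2 is p^4 times a
   rational whose denominator is a product of odd numbers smaller than p. *)

Section PIntegral.

Variable p : nat.
Hypothesis p_prime : prime p.

Definition p_integral (x : rat) :=
  exists a b : int, ~~ (p%:Z %| b)%Z /\ x = a%:~R / b%:~R.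

Lemma p_integral_divz (a b : int) : ~~ (p %| `|b|)%N -> p_integral (a%:~R / b%:~R).
Proof. by move=> p_b; exists a, b; rewrite dvdzE. Qed.

Lemma p_integral_nat n : p_integral n%:R.
Proof.
exists n%:Z, 1; rewrite divr1 dvdzE /= dvdn1; split=> //.
by apply: contraTneq p_prime => ->.
Qed.

Let not_dvdz_mul (b1 b2 : int) :
  ~~ (p%:Z %| b1)%Z -> ~~ (p%:Z %| b2)%Z -> ~~ (p%:Z %| b1 * b2)%Z.
Proof. by rewrite !dvdzE abszM Euclid_dvdM // => /negPf-> /negPf->. Qed.

Let intr_neq0_ndvd (b : int) : ~~ (p%:Z %| b)%Z -> b%:~R != 0 :> rat.
Proof. by apply: contra; rewrite intr_eq0 => /eqP->; apply: dvdz0. Qed.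

Lemma p_integralN x : p_integral x -> p_integral (- x).
Proof. by move=> [a [b [p_b ->]]]; exists (- a), b; rewrite intrN mulNr. Qed.

Lemma p_integralM x y : p_integral x -> p_integral y -> p_integral (x * y).
Proof.
move=> [a1 [b1 [p_b1 ->]]] [a2 [b2 [p_b2 ->]]].
exists (a1 * a2), (b1 * b2); split; first exact: not_dvdz_mul.
by rewrite !intrM invfM mulrACA.
Qed.

Lemma p_integralD x y : p_integral x -> p_integral y -> p_integral (x + y).
Proof.
move=> [a1 [b1 [p_b1 ->]]] [a2 [b2 [p_b2 ->]]].
exists (a1 * b2 + a2 * b1), (b1 * b2); split; first exact: not_dvdz_mul.
by rewrite intrD !intrM; field; rewrite !intr_neq0_ndvd.
Qed.

Lemma p_integral_sum (I : eqType) (r : seq I) (F : I -> rat) :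
  (forall i, i \in r -> p_integral (F i)) -> p_integral (\sum_(i <- r) F i).
Proof.
move=> F_int; rewrite big_seq; apply: big_ind => //; first exact: p_integral_nat 0.
exact: p_integralD.
Qed.

Lemma prod_one_sub_expansion (I : eqType) (r : seq I) (q : rat) (F : I -> rat) :
  p_integral q -> (forall i, i \in r -> p_integral (F i)) ->
  exists2 R, p_integral R &
    \prod_(i <- r) (1 - q * F i) = 1 - q * \sum_(i <- r) F i + q ^+ 2 * R.
Proof.
move=> q_int; elim: r => [|a r IHr] F_int.
  by exists 0; [exact: p_integral_nat 0 | rewrite !big_nil mulr0 subr0 mulr0 addr0].
have Fa_int : p_integral (F a) by apply: F_int; rewrite mem_head.
have F_int_r i : i \in r -> p_integral (F i).
  by move=> ir; apply: F_int; rewrite in_cons ir orbT.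
have [R R_int prod_r] := IHr F_int_r.
exists (F a * \sum_(i <- r) F i + R * (1 - q * F a)).
  apply: p_integralD; first exact: p_integralM (p_integral_sum F_int_r).
  apply: p_integralM => //; apply: p_integralD; first exact: p_integral_nat 1.
  exact/p_integralN/p_integralM.
by rewrite !big_cons prod_r; ring.
Qed.

End PIntegral.

Lemma rat_cong_mod_intro p n x y R :
  p_integral p R -> x - y = (p ^ n)%:R * R -> rat_cong_mod p n x y.
Proof. by move=> [a [b [p_b ->]]] e; exists a, b; rewrite e mulrA. Qed.

Lemma prime_ndvdn_expn_lt p m e : prime p -> (0 < m < p)%N -> ~~ (p %| m ^ e)%N.
Proof.
move=> p_prime /andP[m_gt0 m_lt_p]; rewrite Euclid_dvdX //.
by apply/negP => /andP[/(dvdn_leq m_gt0)]; rewrite leqNgt m_lt_p.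
Qed.

Lemma mul_binS2 m j : ('C(m.+1, j.+2) * j.+2 * j.+1 = m.+1 * (m - j) * 'C(m, j))%N.
Proof.
rewrite [('C(_, _) * _)%N]mulnC -(mul_bin_diag m.+1) /= -!mulnA.
by rewrite [('C(_, _) * _)%N]mulnC mul_bin_left.
Qed.

Lemma mul_bin_centralS k :
  ('C((2 * k).+2, k.+1) * k.+1 * k.+1 = (2 * k).+2 * (2 * k).+1 * 'C(2 * k, k))%N.
Proof.
have e1 := mul_bin_diag (2 * k).+2 k; have e2 := mul_bin_down (2 * k).+1 k.
rewrite /= in e1 e2; rewrite (_ : ((2 * k).+1 - k = k.+1)%N) in e2; last by lia.
by rewrite mulnC mulnA -e1 -mulnA [(_ * k.+1)%N]mulnC -e2 mulnA.
Qed.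

Lemma bin_half_addS (n k : nat) :
  'C(n + k.+1, 2 * k.+1)%:R * (2 * k%:R + 2) * (2 * k%:R + 1)
    = (n%:R + k%:R + 1) * (n%:R - k%:R) * 'C(n + k, 2 * k)%:R :> rat.
Proof.
have -> : 2 * k%:R + 2 = (2 * k).+2%:R :> rat by rewrite -[(2 * k).+2]addn2 natrD natrM.
have -> : 2 * k%:R + 1 = (2 * k).+1%:R :> rat by rewrite -[(2 * k).+1]addn1 natrD natrM.
rewrite addnS mulnS -!natrM mul_binS2 -addn1 !natrM !natrD.
have [k_le_n | n_lt_k] := leqP k n.
  by rewrite (_ : (n + k - 2 * k = n - k)%N) ?natrB //; lia.
by rewrite bin_small ?mulr0 //; lia.
Qed.

Lemma bin_half_add (n k : nat) :
  'C(n + k, 2 * k)%:R = 'C(2 * k, k)%:R / (-16) ^+ k *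
    \prod_(1 <= i < k.+1) (1 - ((n.*2.+1) ^ 2)%:R * (1 / ((2 * i - 1) ^ 2)%:R)) :> rat.
Proof.
elim: k => [|k IHk]; first by rewrite big_geq // muln0 addn0 !bin0 divr1 mulr1.
have k_ge0 : 0 <= k%:R :> rat := ler0n _ k.
have binS : 'C(n + k.+1, 2 * k.+1)%:R = (n%:R + k%:R + 1) * (n%:R - k%:R) *
    'C(n + k, 2 * k)%:R / ((2 * k%:R + 2) * (2 * k%:R + 1)) :> rat.
  by rewrite -bin_half_addS; field; rewrite !lt0r_neq0 //; lra.
have centralS : 'C(2 * k.+1, k.+1)%:R =
    (2 * k%:R + 2) * (2 * k%:R + 1) * 'C(2 * k, k)%:R / (k%:R + 1) ^+ 2 :> rat.
  have kS_neq0 : k%:R + 1 != 0 :> rat by rewrite lt0r_neq0 //; lra.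
  have := congr1 (fun x => x%:R : rat) (mul_bin_centralS k).
  rewrite !natrM -!natr1 natrM => e.
  rewrite mulnS; apply: (mulIf kS_neq0); apply: (mulIf kS_neq0).
  by rewrite e; field.
have odd_sq m : ((m.*2.+1) ^ 2)%:R = (2 * m%:R + 1) ^+ 2 :> rat.
  by rewrite natrX -natr1 -muln2 natrM mulrC.
rewrite big_nat_recr //= (_ : (2 * k.+1 - 1 = k.*2.+1)%N); last by lia.
rewrite binS IHk centralS [(-16) ^+ k.+1]exprS !odd_sq.
have s_neq0 : (-16) ^+ k != 0 :> rat by rewrite expf_neq0.
field; rewrite s_neq0 !lt0r_neq0 //; lra.
Qed.

Theorem lemma2p2 (p k : nat) :
  prime p -> odd p -> (1 <= k)%N -> (k <= (p - 1) %/ 2)%N ->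
  rat_cong_mod p 4
    ('C((p - 1) %/ 2 + k, 2 * k))%:R
    (('C(2 * k, k))%:R / ((-16) ^+ k)
       * (1 - (p ^ 2)%:R * \sum_(1 <= i < k.+1) 1 / ((2 * i - 1) ^ 2)%:R)).
Proof.
move=> p_prime p_odd k_ge1 k_le_n; set n := ((p - 1) %/ 2)%N in k_le_n *.
have p_eq : p = n.*2.+1.
  by have := odd_double_half p; rewrite p_odd -divn2 -muln2 /n; lia.
have p_gt2 : (2 < p)%N by rewrite p_eq; lia.
set c := _ / _.
have c_int : p_integral p c.
  rewrite /c -[16]/(16%:~R) -rmorphN -rmorphXn pmulrn; apply: p_integral_divz.
  by rewrite abszX /= (_ : 16 = 2 ^ 4)%N // -expnM prime_ndvdn_expn_lt.
have inv_sq_int i : i \in index_iota 1 k.+1 ->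
    p_integral p (1 / ((2 * i - 1) ^ 2)%:R).
  rewrite mem_index_iota => /andP[i_ge1 i_le_k].
  rewrite pmulrn -[1]/(1%:~R); apply: p_integral_divz.
  by apply: prime_ndvdn_expn_lt; lia.
have [R R_int prod_eq] :=
  prod_one_sub_expansion p_prime (p_integral_nat p_prime (p ^ 2)) inv_sq_int.
apply: (rat_cong_mod_intro (p_integralM p_prime c_int R_int)).
by rewrite bin_half_add -p_eq prod_eq -/c !natrX; ring.
Qed.
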